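(* Let $(G,S,\mathcal{P},k)$ be an instance of \textsc{Pair-Constrained Edge Subset Feedback Vertex Set} with $G=(V,E)$. Let $Z\subseteq V\setminus V(S)$ be such that $G-Z$ contains no $S$-cycle, and let $Y$ be a set with $Z\subseteq Y\subseteq V\setminus V(S)$ (hence $G-Y$ contains no $S$-cycle). Let $e=\{I,J\}$ be an edge of $H_Y$ such that $e$ sees no single vertex of $Y$ and every pair $\{x,y\}$ with $x,y\in Y$ seen by $e$ belongs to $\mathcal{P}$. Then $e_S$ is irrelevant for $(G,S,\mathcal{P},k)$.
   Context: Graphs are finite, undirected, may contain loops and parallel edges; an $S$-cycle is a cycle containing an edge of $S$; $V(S)$ is the set of endpoints of edges of $S$. An instance $(G,S,\mathcal{P},k)$ of \textsc{Pair-Constrained Edge Subset Feedback Vertex Set} consists of a graph $G=(V,E)$, $S\subseteq E$, a set $\mathcal{P}$ of unordered pairs of distinct vertices (pair-constraints), and $k\in\mathbb{N}$; a solution is $X\subseteq V$ with $|X|\le k$ such that $G-X$ contains no $S$-cycle and $X\cap\{x,y\}\neq\emptyset$ for every $\{x,y\}\in\mathcal{P}$. An edge $f\in S$ is irrelevant for $(G,S,\mathcal{P},k)$ if for every $X\subseteq V$: $X$ is a solution for $(G,S,\mathcal{P},k)$ iff $X$ is a solution for $(G,S\setminus\{f\},\mathcal{P},k)$. Bubbles: the connected components of $G-Y-S$ (delete the vertices of $Y$ and the edges of $S$); $V_I$ denotes the vertex set of bubble $I$. $H_Y$ is the graph whose vertices are the bubbles, with bubbles $I,J$ adjacent iff some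 edge of $S$ joins $V_I$ and $V_J$; since $G-Y$ has no $S$-cycle, for adjacent $I,J$ there is exactly one such edge, denoted $e_S$ for $e=\{I,J\}$. $H_Y^+$ is obtained from $H_Y$ by adding the vertices of $Y$ and an edge $\{y,I\}$ whenever $y\in Y$ is adjacent in $G$ to a vertex of $V_I$. An edge $e=\{I,J\}$ of $H_Y$ sees a vertex $y\in Y$ if $\{I,y\},\{J,y\}\in E(H_Y^+)$, and sees a pair $\{x,y\}$ of distinct $x,y\in Y$ if $\{I,x\},\{J,y\}\in E(H_Y^+)$ or $\{I,y\},\{J,x\}\in E(H_Y^+)$. *)

From mathcomp Require Import all_boot.
Set Implicit Arguments. Unset Strict Implicit. Unset Printing Implicit Defensive.

(* A finite multigraph (loops and parallel edges allowed): vertex type V,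
   edge type E, each edge g has (unordered) endpoints ends g = (u, v);
   a loop has u = v. *)
Section MultiGraph.
Variables (V E : finType) (ends : E -> V * V).

Definition joins (g : E) (u v : V) : bool :=
  (ends g == (u, v)) || (ends g == (v, u)).

(* A cycle: vertices vs = v_0..v_{n-1} pairwise distinct, edges
   es = g_0..g_{n-1} pairwise distinct, n >= 1, g_i joins v_i and
   v_{(i+1) mod n}. (n = 1: a loop; n = 2: two parallel edges.) *)
Definition is_cycle (vs : seq V) (es : seq E) : Prop :=
  [/\ size vs = size es, 0 < size vs, uniq vs, uniq es &
      forall (i : nat) (v0 : V) (g0 : E), i < size vs ->
        joins (nth g0 es i) (nth v0 vs i) (nth v0 vs (i.+1 %% size vs))].

Definition has_S_cycle_avoiding (S : {set E}) (X : {set V}) : Prop :=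
  exists (vs : seq V) (es : seq E),
    [/\ is_cycle vs es, all (fun v => v \notin X) vs & has (fun g => g \in S) es].

Definition VS (S : {set E}) : {set V} :=
  [set v | [exists g in S, (v == (ends g).1) || (v == (ends g).2)]].

Definition is_solution (S : {set E}) (P : {set {set V}}) (k : nat)
  (X : {set V}) : Prop :=
  [/\ #|X| <= k, ~ has_S_cycle_avoiding S X &
      forall p, p \in P -> X :&: p != set0].

Definition irrelevant (S : {set E}) (P : {set {set V}}) (k : nat) (f : E) : Prop :=
  f \in S /\
  forall X : {set V}, is_solution S P k X <-> is_solution (S :\ f) P k X.

Definition adjYS (S : {set E}) (Y : {set V}) : rel V :=
  fun u v => [&& u \notin Y, v \notin Y & [exists g, (g \notin S) && joins g u v]].

(* the bubble (component of G - Y - S) containing a (for a \notin Y) *)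
Definition bubble_of (S : {set E}) (Y : {set V}) (a : V) : {set V} :=
  [set v | connect (adjYS S Y) a v].

Definition is_bubble (S : {set E}) (Y : {set V}) (B : {set V}) : Prop :=
  exists a, a \notin Y /\ B = bubble_of S Y a.

(* edge {y, I} of H_Y^+ : y is adjacent in G to a vertex of V_I *)
Definition adjHplus (y : V) (I : {set V}) : Prop :=
  exists v g, v \in I /\ joins g y v.

Definition sees_vertex (I J : {set V}) (y : V) : Prop :=
  adjHplus y I /\ adjHplus y J.

Definition sees_pair (I J : {set V}) (x y : V) : Prop :=
  (adjHplus x I /\ adjHplus y J) \/ (adjHplus y I /\ adjHplus x J).

End MultiGraph.

From mathcomp Require Import all_boot.

Set Implicit Arguments.
Unset Strict Implicit.
Unset Printing Implicit Defensive.

(** An S-cycle avoiding X that uses no edge of S other than f = e_S crosses f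
from V_I to V_J and returns along an S-free walk.  That walk has to leave the
bubble I and enter the bubble J, which it can only do through vertices x, y of
Y adjacent to V_I and V_J respectively, and neither lies in X.  If x = y, the
edge e sees x; otherwise e sees the pair {x, y}, which is a pair-constraint
that X must hit. *)

Lemma modn_addr_neq i j n : 0 < j < n -> i < n -> (i + j) %% n != i.
Proof.
case/andP=> j_gt0 j_lt_n i_lt_n.
rewrite -[X in _ != X](modn_small i_lt_n) -[i in X in _ != X]addn0 eqn_modDl.
by rewrite mod0n modn_small // -lt0n.
Qed.

Lemma setI_set2_eq0 (T : finType) (X : {set T}) x y :
  x \notin X -> y \notin X -> X :&: [set x; y] = set0.
Proof.
move=> xX yX; apply/setP=> z; rewrite !inE.
by apply/negbTE/andP=> -[zX /orP[]/eqP zE]; move: zX; rewrite zE; apply/negP.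
Qed.

Section WalkOfFunction.
Variables (T : Type) (e : rel T) (w : nat -> T).

Lemma last_mkseq_succ m : last (w 0) (mkseq (w \o succn) m) = w m.
Proof. by case: m => [|m] //; rewrite mkseqS last_rcons. Qed.

Lemma path_mkseq_succ m :
  (forall j, j < m -> e (w j) (w j.+1)) -> path e (w 0) (mkseq (w \o succn) m).
Proof.
elim: m => [|m IHm] // step; rewrite mkseqS rcons_path last_mkseq_succ.
by rewrite IHm ?step // => j /ltnW; apply: step.
Qed.

End WalkOfFunction.

Section Graph.
Variables (V E : finType) (ends : E -> V * V).

Definition adj_in (A : {pred E}) : rel V :=
  fun u v => [exists g in A, joins ends g u v].

Lemma joinsC g u v : joins ends g u v = joins ends g v u.
Proof. by rewrite /joins orbC. Qed.

Lemma adj_in_sym A : symmetric (adj_in A).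
Proof.
by move=> u v; apply/existsP/existsP=> -[g]; exists g; rewrite joinsC.
Qed.

Lemma joins_endpoints g u v u' v' :
  joins ends g u v -> joins ends g u' v' ->
  (u = u' /\ v = v') \/ (u = v' /\ v = u').
Proof.
by rewrite /joins => /orP[]/eqP-> /orP[]/eqP[-> ->]; [left|right|right|left].
Qed.

Lemma has_S_cycle_avoidingS (S1 S2 : {set E}) X :
  S1 \subset S2 ->
  has_S_cycle_avoiding ends S1 X -> has_S_cycle_avoiding ends S2 X.
Proof.
move=> /subsetP sS12 [vs [es [cyc vsX hasS]]].
by exists vs, es; split=> //; apply: sub_has hasS.
Qed.

(* [x :: p] is the rest of the cycle, from the far end of [f] back to its near end. *)
Lemma cycle_minus_edge_walk vs es f :
  is_cycle ends vs es -> f \in es ->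
  exists x p, [/\ {subset x :: p <= vs},
    path (adj_in [predD1 es & f]) x p & joins ends f (last x p) x].
Proof.
case=> size_es n_gt0 _ uniq_es joins_at f_es.
set n := size vs; set i := index f es; set v0 := (ends f).1.
have i_lt_n : i < n by rewrite /n size_es index_mem.
pose w j := nth v0 vs ((i + j.+1) %% n).
have w_vs j : w j \in vs by rewrite mem_nth // ltn_pmod.
have w_last : w n.-1 = nth v0 vs i by rewrite /w prednK // modnDr modn_small.
exists (w 0), (mkseq (w \o succn) n.-1); split.
- by move=> v; rewrite inE => /predU1P[->|/mapP[j _ ->]]; apply: w_vs.
- apply: (@path_mkseq_succ _ _ w) => j j_lt; apply/existsP.
  have idx_lt : (i + j.+1) %% n < n by rewrite ltn_pmod.
  have j1_lt : j.+1 < n by rewrite -ltn_predRL.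
  exists (nth f es ((i + j.+1) %% n)); rewrite !inE mem_nth -?size_es //.
  rewrite -[X in _ != X](nth_index f f_es) nth_uniq -?size_es ?modn_addr_neq //.
  have := joins_at _ v0 f idx_lt.
  by rewrite -/n -[(_ %% n).+1]addn1 modnDml addn1 -addnS.
- by rewrite last_mkseq_succ w_last /w addn1 -{1}(nth_index f f_es) joins_at.
Qed.

Lemma single_S_edge_walk (S : {set E}) X f :
  has_S_cycle_avoiding ends S X -> ~ has_S_cycle_avoiding ends (S :\ f) X ->
  exists x p, [/\ all (fun v => v \notin X) (x :: p),
    path (adj_in (~: S)) x p & joins ends f (last x p) x].
Proof.
move=> [vs [es [cyc vsX hasS]]] no_cycle.
have only_f g : g \in es -> g \in S -> g = f.
  move=> g_es gS; apply/eqP/negPn/negP => gf; apply: no_cycle.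
  by exists vs, es; split=> //; apply/hasP; exists g; rewrite // !inE gf.
have f_es : f \in es by case/hasP: hasS => g g_es gS; rewrite -(only_f g).
have [x [p [p_vs p_adj fxp]]] := cycle_minus_edge_walk cyc f_es.
exists x, p; split=> //.
- by apply/allP=> v /p_vs; apply: (allP vsX).
- apply: sub_path p_adj => u v /existsP[g /andP[/andP[gf g_es] guv]].
  apply/existsP; exists g; rewrite inE guv andbT.
  by apply: contra gf => gS; rewrite (only_f g).
Qed.

Section Bubbles.
Variables (S : {set E}) (Y : {set V}).

Lemma adjYS_sym : symmetric (adjYS ends S Y).
Proof.
move=> u v; apply/and3P/and3P=> [] [uY vY /existsP[g guv]].
all: by split=> //; apply/existsP; exists g; rewrite joinsC.
Qed.

Lemma bubble_notin a v : a \notin Y -> v \in bubble_of ends S Y a -> v \notin Y.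
Proof.
move=> aY; rewrite inE => /connectP[p a_p ->]; case/lastP: p a_p => [|p z] //.
by rewrite last_rcons rcons_path => /andP[_ /and3P[]].
Qed.

Lemma bubble_of_eq a b v :
  v \in bubble_of ends S Y a -> v \in bubble_of ends S Y b ->
  bubble_of ends S Y a = bubble_of ends S Y b.
Proof.
rewrite !inE => av bv; have sym_con := sym_connect_sym adjYS_sym.
have ab : connect (adjYS ends S Y) a b by rewrite (connect_trans av) // sym_con.
apply/setP=> z; rewrite !inE; apply/idP/idP; last exact: connect_trans.
by apply: connect_trans; rewrite sym_con.
Qed.

Lemma is_bubble_disjoint B C v :
  is_bubble ends S Y B -> is_bubble ends S Y C -> B != C -> v \in C -> v \notin B.
Proof.
move=> [a [_ ->]] [b [_ ->]] BC vC; apply: contra BC => vB.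
by rewrite (bubble_of_eq vB vC).
Qed.

Lemma bubble_step B u v :
  is_bubble ends S Y B -> u \in B -> adj_in (~: S) u v -> v \notin Y -> v \in B.
Proof.
move=> [a [aY ->]] uB uv vY; move: (uB); rewrite !inE => au.
apply: connect_trans au (connect1 _); rewrite /adjYS vY (bubble_notin aY uB).
by move: uv => /existsP[g]; rewrite inE => guv; apply/existsP; exists g.
Qed.

Lemma path_exits_bubble B x p :
  is_bubble ends S Y B -> path (adj_in (~: S)) x p -> x \in B -> last x p \notin B ->
  exists2 u, (u \in p) && (u \in Y) & adjHplus ends u B.
Proof.
move=> bB; elim: p x => [|z p IHp] x /=; first by move=> _ ->.
case/andP=> /[dup] xz /existsP[g /andP[_ gxz]] zp xB zB.
have [zY|zY] := boolP (z \in Y).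
  by exists z; rewrite ?mem_head //; exists x, g; rewrite joinsC.
have [u /andP[up uY] uB] := IHp z zp (bubble_step bB xB xz zY) zB.
by exists u; rewrite // inE up orbT.
Qed.

Lemma path_crosses_bubble B x p :
  is_bubble ends S Y B -> path (adj_in (~: S)) x p ->
  (x \in B) != (last x p \in B) ->
  exists2 u, (u \in x :: p) && (u \in Y) & adjHplus ends u B.
Proof.
move=> bB xp; have [xB|xB] := boolP (x \in B).
  rewrite eq_sym eqb_id => lB.
  have [u /andP[up uY] uB] := path_exits_bubble bB xp xB lB.
  by exists u; rewrite // inE up orbT.
rewrite eq_sym eqbF_neg negbK; move: xp xB.
case/lastP: p => [|q z]; first by move=> _ /negbTE->.
rewrite last_rcons => xp xB zB.
have zq : path (adj_in (~: S)) z (rev (x :: q)).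
  rewrite -(belast_rcons x q z) -{1}(last_rcons x q z) rev_path.
  by apply: sub_path xp => u v; rewrite adj_in_sym.
have zq_last : last z (rev (x :: q)) \notin B by rewrite rev_cons last_rcons.
have [u /andP[uq uY] uB] := path_exits_bubble bB zq zB zq_last.
by exists u; rewrite // -rcons_cons mem_rcons inE -mem_rev uq orbT.
Qed.

End Bubbles.

End Graph.

Theorem lemma14 (V E : finType) (ends : E -> V * V) (S : {set E})
  (P : {set {set V}}) (k : nat) (Z Y : {set V}) (I J : {set V}) (f : E) :
  (forall p, p \in P -> #|p| = 2) ->
  Z \subset ~: VS ends S ->
  ~ has_S_cycle_avoiding ends S Z ->
  Z \subset Y -> Y \subset ~: VS ends S ->
  (* e = {I,J} is an edge of H_Y, and e_S = f *)
  is_bubble ends S Y I -> is_bubble ends S Y J -> I != J ->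
  f \in S -> (exists a b, [/\ a \in I, b \in J & joins ends f a b]) ->
  (* e sees no single vertex of Y *)
  (forall y, y \in Y -> ~ sees_vertex ends I J y) ->
  (* every pair seen by e is a pair-constraint *)
  (forall x y, x \in Y -> y \in Y -> x != y -> sees_pair ends I J x y ->
     [set x; y] \in P) ->
  irrelevant ends S P k f.
Proof.
(* The hypotheses on [Z], on [V(S)] and on the size of the pairs only make
   H_Y well defined in the paper; the argument itself does not need them. *)
move=> _ _ _ _ _ I_bubble J_bubble IJ fS [a [b [aI bJ fab]]] no_vertex pairs.
split=> // X; split=> -[Xk no_cycle hitsP]; split=> // cycle_S.
  by apply: no_cycle; apply: has_S_cycle_avoidingS cycle_S; apply: subD1set.
have [x [p [pX xp fxp]]] := single_S_edge_walk cycle_S no_cycle.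
have bNI : b \notin I := is_bubble_disjoint I_bubble J_bubble IJ bJ.
have aNJ : a \notin J by rewrite (is_bubble_disjoint J_bubble I_bubble) // eq_sym.
have [crossI crossJ] : (x \in I) != (last x p \in I) /\ (x \in J) != (last x p \in J).
  by case: (joins_endpoints fxp fab) => -[-> ->]; rewrite aI bJ (negbTE bNI) (negbTE aNJ).
have [u /andP[up uY] uI] := path_crosses_bubble I_bubble xp crossI.
have [v /andP[vp vY] vJ] := path_crosses_bubble J_bubble xp crossJ.
have [uv|uv] := eqVneq u v; first by subst v; apply: (no_vertex u uY).
have := hitsP _ (pairs u v uY vY uv (or_introl (conj uI vJ))).
by rewrite setI_set2_eq0 ?eqxx // (allP pX).
Qed.
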